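(* Let $u(t)=\sum_{i=1}^M s_i(t)e^{j2\pi f_it}$ be a signal in the class $\mathcal{M}_2$ described in the context, observed by the L-shaped array described in the context with $N$ sensors along each axis and spacing $d$. Define $\mathbf{R}_1=\mathbb{E}[\mathbf{x}_1\mathbf{z}_1^H]$, $\mathbf{R}_2=\mathbb{E}[\mathbf{x}_2\mathbf{z}_1^H]$, $\mathbf{R}_3=\mathbb{E}[\mathbf{x}_1\mathbf{z}_2^H]$ and $\mathbf{R}=[\mathbf{R}_1^T\ \mathbf{R}_2^T\ \mathbf{R}_3^T]^T\in\mathbb{C}^{3(N-1)\times(N-1)}$, and let $\mathbf{U}_1\in\mathbb{C}^{3(N-1)\times M}$ be the matrix of left singular vectors of $\mathbf{R}$ corresponding to its $M$ largest singular values. If (c1) $d\le\frac{c}{f_{\text{Nyq}}}$ and (c2) $N>M$, then there exists an invertible $M\times M$ matrix $\mathbf{T}$ such that $$\mathbf{U}_1=\begin{bmatrix}\mathbf{A}_{x_1}\\ \mathbf{A}_{x_1}\boldsymbol{\Phi}\\ \mathbf{A}_{x_1}\boldsymbol{\Psi}^H\end{bmatrix}\mathbf{T}.$$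
   Context: Class $\mathcal{M}_2$: $u$ is complex valued with Fourier transform supported in $[-f_{\text{Nyq}}/2,f_{\text{Nyq}}/2]$, each $s_i$ has Fourier transform supported in $[-B/2,B/2]$, $\min_{i\neq j}|f_i-f_j|>B$; the $s_i$ are wide-sense stationary, zero mean, mutually uncorrelated, with $\mathbb{E}[|s_i(t)|^2]\neq 0$; transmission $i$ lies in the $xz$-plane with unknown angle of arrival $\theta_i$, $|\theta_i|<90^\circ$ (measured from the positive $x$ axis), and the electronic angles are distinct: $f_i\cos\theta_i\neq f_j\cos\theta_j$ and $f_i\sin\theta_i\neq f_j\sin\theta_j$ for $i\neq j$. $c>0$ is the propagation speed. L-shaped array: two orthogonal uniform linear arrays (along $x$ and $z$), $N$ sensors each with a common sensor at the origin, spacing $d$; every sensor multiplies its received signal by the same periodic function $p(t)$, low-pass filters and samples at rate $f_s$. With $\tau_n^x(\theta)=\frac{dn}{c}\cos\theta$, $\tau_n^z(\theta)=\frac{dn}{c}\sin\theta$, the samples satisfy $\mathbf{x}[k]=\mathbf{A}_x\mathbf{w}[k]$, $\mathbf{z}[k]=\mathbf{A}_z\mathbf{w}[k]$, where $(\mathbf{A}_x)_{n,i}=e^{j2\pi f_i\tau_n^x(\theta_i)}$, $(\mathbf{A}_z)_{n,i}=e^{j2\pi f_i\tau_n^z(\theta_i)}$, $n=1,\dots,N$, and $\mathbf{w}[k]\in\mathbb{C}^M$ has entries $w_i[k]=\tilde s_i(k/f_s)$ ($\tilde s_i$ the filtered version of $s_i(t)e^{j2\pi f_it}p(t)$); $\mathbf{R}_w=\mathbb{E}[\mathbf{w}\mathbf{w}^H]$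 is diagonal with nonzero diagonal entries. $\mathbf{x}_1,\mathbf{A}_{x_1}$ (resp. $\mathbf{x}_2,\mathbf{A}_{x_2}$) are the first (resp. last) $N-1$ rows of $\mathbf{x},\mathbf{A}_x$; likewise $\mathbf{z}_1,\mathbf{z}_2,\mathbf{A}_{z_1},\mathbf{A}_{z_2}$. $\boldsymbol{\Phi}=\mathrm{diag}(e^{j2\pi f_i\tau_1^x(\theta_i)})_{i=1}^M$, $\boldsymbol{\Psi}=\mathrm{diag}(e^{j2\pi f_i\tau_1^z(\theta_i)})_{i=1}^M$, so $\mathbf{A}_{x_2}=\mathbf{A}_{x_1}\boldsymbol{\Phi}$, $\mathbf{A}_{z_2}=\mathbf{A}_{z_1}\boldsymbol{\Psi}$. *)

From HB Require Import structures.
From mathcomp Require Import all_boot all_order all_algebra.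
From mathcomp Require Import all_classical all_reals all_analysis.
From mathcomp.real_closed Require Import complex.
Set Implicit Arguments. Unset Strict Implicit. Unset Printing Implicit Defensive.
Import Order.TTheory GRing.Theory Num.Theory.
Local Open Scope ring_scope.
Local Open Scope complex_scope.

Section Defs.
Variable R : realType.
Local Notation C := R[i].

Definition expj (a : R) : C := (cos a +i* sin a).

Definition mxH (m n : nat) (A : 'M[C]_(m, n)) : 'M[C]_(n, m) := (map_mx conjc A)^T.

Definition unitary_mx (n : nat) (U : 'M[C]_n) : Prop := mxH U *m U = 1%:M.

Definition sv_diag (m n : nat) (S : 'M[C]_(m, n)) : Prop :=
  [/\ forall (i : 'I_m) (j : 'I_n), (i : nat) <> j -> S i j = 0,
      forall (i : 'I_m) (j : 'I_n), (i : nat) = j -> complex.Im (S i j) = 0 /\ 0 <= complex.Re (S i j)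
    & forall (i i' : 'I_m) (j j' : 'I_n), (i : nat) = j -> (i' : nat) = j' ->
        (i <= i')%N -> complex.Re (S i' j') <= complex.Re (S i j)].

Definition is_svd (m n : nat) (A : 'M[C]_(m, n)) (U : 'M[C]_m) (S : 'M[C]_(m, n))
  (V : 'M[C]_n) : Prop :=
  [/\ unitary_mx U, unitary_mx V, sv_diag S & A = U *m S *m mxH V].

Definition first_cols (m k : nat) : 'M[C]_(m, k) :=
  \matrix_(a < m, b < k) ((a : nat) == b)%:R.

Definition top_left_sing_vecs (m n k : nat) (A : 'M[C]_(m, n)) (U1 : 'M[C]_(m, k)) : Prop :=
  exists U S V, is_svd A U S V /\ U1 = U *m first_cols m k.

Definition sel_first (N : nat) : 'M[C]_(N.-1, N) :=
  \matrix_(a < N.-1, b < N) ((b : nat) == a)%:R.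
Definition sel_last (N : nat) : 'M[C]_(N.-1, N) :=
  \matrix_(a < N.-1, b < N) ((b : nat) == a.+1)%:R.

Definition Ec (d : measure_display) (T : measurableType d) (P : probability T R)
  (X : T -> C) : C :=
  (fine ('E_P[fun t => complex.Re (X t)]) +i* fine ('E_P[fun t => complex.Im (X t)])).

Definition c_integrable (d : measure_display) (T : measurableType d)
  (P : probability T R) (X : T -> C) : Prop :=
  P.-integrable setT (EFin \o (fun t => complex.Re (X t))) /\
  P.-integrable setT (EFin \o (fun t => complex.Im (X t))).

Definition Ecorr (d : measure_display) (T : measurableType d) (P : probability T R)
  (m n : nat) (X : T -> 'cV[C]_m) (Y : T -> 'cV[C]_n) : 'M[C]_(m, n) :=
  \matrix_(a, b) Ec P (fun t => X t a 0 * conjc (Y t b 0)).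

Definition taux (d c : R) (n : nat) (th : R) : R := d * n%:R / c * cos th.
Definition tauz (d c : R) (n : nat) (th : R) : R := d * n%:R / c * sin th.

(* steering matrices; rows n = 1..N *)
Definition Ax (N M : nat) (d c : R) (f th : 'I_M -> R) : 'M[C]_(N, M) :=
  \matrix_(n < N, i < M) expj (2 * pi * f i * taux d c n.+1 (th i)).
Definition Az (N M : nat) (d c : R) (f th : 'I_M -> R) : 'M[C]_(N, M) :=
  \matrix_(n < N, i < M) expj (2 * pi * f i * tauz d c n.+1 (th i)).
Definition Phi (M : nat) (d c : R) (f th : 'I_M -> R) : 'M[C]_M :=
  diag_mx (\row_(i < M) expj (2 * pi * f i * taux d c 1 (th i))).
Definition Psi (M : nat) (d c : R) (f th : 'I_M -> R) : 'M[C]_M :=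
  diag_mx (\row_(i < M) expj (2 * pi * f i * tauz d c 1 (th i))).

End Defs.

From HB Require Import structures.
From mathcomp Require Import all_boot all_order all_algebra.
From mathcomp Require Import all_classical all_reals all_analysis.
From mathcomp.real_closed Require Import complex.
From mathcomp Require Import ring lra.
Import Order.TTheory GRing.Theory Num.Theory.
Local Open Scope ring_scope.
Local Open Scope complex_scope.
Set Implicit Arguments. Unset Strict Implicit. Unset Printing Implicit Defensive.

(* With R_w = E[w w^H] and A_z1 the z-steering matrix, every block of R factors through the
   sources: R = [A_x1; A_x1 Phi; A_x1 Psi^H] (R_w A_z1^H), because R_w is diagonal and hence
   commutes with Psi^H.  The spacing d <= c/f_Nyq keeps every electronic phase
   2 pi f_i d cos(theta_i)/c strictly inside (-pi, pi), so distinct electronic angles give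
   distinct phasors and the leading M x M Vandermonde blocks of A_x1 and A_z1 are invertible;
   since N > M, R has rank M.  For an SVD R = U S V^H the M leading singular values are then
   nonzero, and U_1 = R V D with D inverting them exhibits U_1 as the stacked steering matrix
   times an M x M matrix T; T is invertible because U_1 has orthonormal columns. *)

Section Expj.
Variable R : realType.
Local Notation C := R[i].

Lemma expjD (a b : R) : expj a * expj b = expj (a + b) :> C.
Proof. by rewrite /expj cosD sinD /=; congr (_ +i* _); ring. Qed.

Lemma expj0 : expj 0 = 1 :> C.
Proof. by rewrite /expj cos0 sin0. Qed.

Lemma expj_neq0 (a : R) : expj a != 0 :> C.
Proof.
apply/eqP => ea0; have := expjD a (- a).
by rewrite ea0 mul0r subrr expj0 => /eqP; rewrite eq_sym oner_eq0.
Qed.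

Lemma expjX (a : R) n : expj a ^+ n = expj (n%:R * a) :> C.
Proof.
elim: n => [|n IHn]; first by rewrite expr0 mul0r expj0.
by rewrite exprS IHn expjD -natr1 mulrDl mul1r addrC.
Qed.

Lemma sin_eq0_norm_lt_pi (y : R) : `|y| < pi -> sin y = 0 -> y = 0.
Proof.
move=> ypi sy0; case: (ltgtP y 0) => [y_lt0|y_gt0|//].
- have : 0 < sin (- y).
    by apply: sin_gt0_pi; rewrite oppr_gt0 y_lt0 -(ltr0_norm y_lt0).
  by rewrite sinN sy0 oppr0 ltxx.
- have : 0 < sin y by apply: sin_gt0_pi; rewrite y_gt0 -(gtr0_norm y_gt0).
  by rewrite sy0 ltxx.
Qed.

Lemma expj_inj_lt_2pi (a b : R) : `|a - b| < pi *+ 2 -> expj a = expj b :> C -> a = b.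
Proof.
move=> ab_lt eab; set y := (a - b) / 2.
have aby : a - b = y + y by rewrite /y -splitr.
have [cab _] : expj (a - b) = 1 :> C by rewrite -expjD eab expjD subrr expj0.
have sy0 : sin y = 0.
  move: cab; rewrite aby cosD -!expr2 => cy.
  have : sin y ^+ 2 = 0 by have := cos2Dsin2 y; lra.
  by move/eqP; rewrite sqrf_eq0 => /eqP.
have y_lt : `|y| < pi.
  by rewrite /y normrM normfV (ger0_norm (ler0n _ 2)) ltr_pdivrMr // mulr_natr.
by apply/eqP; rewrite -subr_eq0 aby (sin_eq0_norm_lt_pi y_lt sy0) addr0.
Qed.

Lemma expj_2pi_neq (k F u v : R) : 0 < k -> k * F <= 1 ->
  `|u| < F / 2 -> `|v| < F / 2 -> u != v ->
  expj (2 * pi * k * u) != expj (2 * pi * k * v) :> C.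
Proof.
move=> k_gt0 kF_le1; rewrite !ltr_norml => /andP[u1 u2] /andP[v1 v2] uv.
apply: contra_neq uv => /expj_inj_lt_2pi ekuv; have pi_gt0 := pi_gt0 R.
have : 2 * pi * k * u = 2 * pi * k * v.
  have [kuv1 kuv2] : - 1 < k * (u - v) /\ k * (u - v) < 1 by split; nra.
  apply: ekuv; rewrite -mulrBr -mulr_natr ltr_norml.
  by apply/andP; split; nra.
by move/(mulfI _); apply; rewrite !mulf_neq0 ?gt_eqF.
Qed.
End Expj.

Lemma Re_mulc (R : realType) (x y : R[i]) :
  complex.Re (x * y) = complex.Re x * complex.Re y - complex.Im x * complex.Im y.
Proof. by case: x; case: y. Qed.

Lemma Im_mulc (R : realType) (x y : R[i]) :
  complex.Im (x * y) = complex.Re x * complex.Im y + complex.Im x * complex.Re y.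
Proof. by case: x => a b; case: y => c e /=; rewrite addrC. Qed.

Section ComplexExpectation.
Context d (T : measurableType d) (R : realType) (P : probability T R).
Local Notation C := R[i].
Implicit Types (X Y : T -> C) (a : C).

Definition cLfun1 X :=
  (fun t => complex.Re (X t)) \in Lfun P 1 /\ (fun t => complex.Im (X t)) \in Lfun P 1.

Lemma c_integrable_Lfun1 X : c_integrable P X -> cLfun1 X.
Proof. by case=> iRe iIm; split; apply/Lfun1_integrable. Qed.

Lemma cLfun1D X Y : cLfun1 X -> cLfun1 Y -> cLfun1 (fun t => X t + Y t).
Proof.
case=> LReX LImX [LReY LImY]; split.
- under eq_fun do rewrite raddfD /=; exact: rpredD.
- under eq_fun do rewrite raddfD /=; exact: rpredD.
Qed.

Lemma cLfun1Ml a X : cLfun1 X -> cLfun1 (fun t => a * X t).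
Proof.
case=> LRe LIm; split.
- rewrite (_ : (fun t => _) = complex.Re a *: (fun t => complex.Re (X t))
                              - complex.Im a *: (fun t => complex.Im (X t))).
    by rewrite rpredB // rpredZ.
  by apply/funext => t; rewrite Re_mulc.
- rewrite (_ : (fun t => _) = complex.Re a *: (fun t => complex.Im (X t))
                              + complex.Im a *: (fun t => complex.Re (X t))).
    by rewrite rpredD // rpredZ.
  by apply/funext => t; rewrite Im_mulc.
Qed.

Lemma cLfun1_sum (I : Type) (r : seq I) (F : I -> T -> C) :
  (forall i, cLfun1 (F i)) -> cLfun1 (fun t => \sum_(i <- r) F i t).
Proof.
move=> LF; elim: r => [|i r IHr].
  under eq_fun do rewrite big_nil.
  by split; rewrite (_ : (fun _ => _) = cst 0) ?Lfun_cst.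
under eq_fun do rewrite big_cons; exact: cLfun1D.
Qed.

Lemma EcD X Y : cLfun1 X -> cLfun1 Y -> Ec P (fun t => X t + Y t) = Ec P X + Ec P Y.
Proof.
case=> LReX LImX [LReY LImY]; rewrite /Ec.
have -> : (fun t => complex.Re (X t + Y t)) =
          (fun t => complex.Re (X t)) \+ (fun t => complex.Re (Y t)).
  by apply/funext => t; rewrite raddfD.
have -> : (fun t => complex.Im (X t + Y t)) =
          (fun t => complex.Im (X t)) \+ (fun t => complex.Im (Y t)).
  by apply/funext => t; rewrite raddfD.
by rewrite !expectationD // !fineD // expectation_fin_num.
Qed.

Lemma EcMl a X : cLfun1 X -> Ec P (fun t => a * X t) = a * Ec P X.
Proof.
case=> LRe LIm; rewrite /Ec.
have LZ k (f : T -> R) : f \in Lfun P 1 -> k \o* f \in Lfun P 1.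
  by move=> Lf; rewrite (_ : k \o* f = k *: f) ?rpredZ //; apply/funext => t /=; rewrite mulrC.
have -> : (fun t => complex.Re (a * X t)) =
          (complex.Re a \o* (fun t => complex.Re (X t)))
          \- (complex.Im a \o* (fun t => complex.Im (X t))).
  by apply/funext => t; rewrite Re_mulc /= mulrC [complex.Im a * _]mulrC.
have -> : (fun t => complex.Im (a * X t)) =
          (complex.Re a \o* (fun t => complex.Im (X t)))
          \+ (complex.Im a \o* (fun t => complex.Re (X t))).
  by apply/funext => t; rewrite Im_mulc /= mulrC [complex.Im a * _]mulrC.
have fRe := expectation_fin_num LRe; have fIm := expectation_fin_num LIm.
rewrite expectationB ?LZ // expectationD ?LZ // !expectationZl //.
rewrite fineB ?fin_numM // fineD ?fin_numM // !fineM //.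
by case: a => a b /=; congr (_ +i* _); ring.
Qed.

Lemma Ec_sum (I : Type) (r : seq I) (F : I -> T -> C) :
  (forall i, cLfun1 (F i)) ->
  Ec P (fun t => \sum_(i <- r) F i t) = \sum_(i <- r) Ec P (F i).
Proof.
move=> LF; elim: r => [|i r IHr].
  under eq_fun do rewrite big_nil.
  by rewrite big_nil /Ec /= (_ : (fun _ => _) = cst 0) // expectation_cst.
under eq_fun do rewrite big_cons.
by rewrite EcD ?IHr ?big_cons //; exact: cLfun1_sum.
Qed.

Lemma Ecorr_mulmx (M m n : nat) (A : 'M[C]_(m, M)) (B : 'M[C]_(n, M))
    (w : T -> 'cV[C]_M) :
  (forall i j, c_integrable P (fun t => w t i 0 * conjc (w t j 0))) ->
  Ecorr P (fun t => A *m w t) (fun t => B *m w t) = A *m Ecorr P w w *m mxH B.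
Proof.
move=> iw; apply/matrixP => a b; rewrite !mxE.
have Lw i j := c_integrable_Lfun1 (iw i j).
have -> : (fun t => (A *m w t) a 0 * conjc ((B *m w t) b 0)) = fun t =>
    \sum_(i < M) \sum_(j < M) (A a i * conjc (B b j)) * (w t i 0 * conjc (w t j 0)).
  apply/funext => t; rewrite !mxE rmorph_sum big_distrl; apply: eq_bigr => i _.
  by rewrite big_distrr; apply: eq_bigr => j _; rewrite rmorphM mulrACA.
rewrite Ec_sum => [|i]; last by apply: cLfun1_sum => j; exact/cLfun1Ml/Lw.
have inner i : Ec P (fun t => \sum_(j < M) A a i * conjc (B b j) * (w t i 0 * conjc (w t j 0)))
    = \sum_(j < M) A a i * conjc (B b j) * Ecorr P w w i j.
  rewrite Ec_sum => [|j]; last exact/cLfun1Ml/Lw.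
  by apply: eq_bigr => j _; rewrite EcMl ?mxE.
rewrite (eq_bigr _ (fun i _ => inner i)) exchange_big; apply: eq_bigr => j _.
by rewrite !mxE big_distrl; apply: eq_bigr => i _; rewrite !mxE mulrAC.
Qed.
End ComplexExpectation.

Lemma mxrank_ge_unit_mulmx (F : fieldType) m n p
    (E : 'M[F]_(p, m)) (A : 'M[F]_(m, n)) (G : 'M[F]_(n, p)) :
  E *m A *m G \in unitmx -> (p <= \rank A)%N.
Proof.
move=> EAGu; rewrite -(mxrank_unit EAGu).
by apply: leq_trans (mxrankM_maxl _ _) _; exact: mxrankM_maxr.
Qed.

Lemma mxrank_col_mxl (F : fieldType) m1 m2 n (A : 'M[F]_(m1, n)) (B : 'M[F]_(m2, n)) :
  (\rank A <= \rank (col_mx A B))%N.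
Proof. by apply: mxrankS; have := submx_refl (col_mx A B); rewrite col_mx_sub => /andP[]. Qed.

Lemma is_diag_mx_unit (F : fieldType) n (A : 'M[F]_n) :
  is_diag_mx A -> (forall i, A i i != 0) -> A \in unitmx.
Proof.
case/diag_mxP => d -> Ad_neq0; rewrite unitmxE det_diag unitfE.
by apply/prodf_neq0 => i _; have := Ad_neq0 i; rewrite mxE eqxx mulr1n.
Qed.

Section ComplexMatrix.
Variable R : realType.
Local Notation C := R[i].

Lemma mxH_mul m n p (A : 'M[C]_(m, n)) (B : 'M[C]_(n, p)) : mxH (A *m B) = mxH B *m mxH A.
Proof. by rewrite /mxH map_mxM trmx_mul. Qed.

Lemma mxH_diag n (r : 'rV[C]_n) : mxH (diag_mx r) = diag_mx (map_mx conjc r).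
Proof. by rewrite /mxH map_diag_mx tr_diag_mx. Qed.

Lemma mxH_unit n (A : 'M[C]_n) : A \in unitmx -> mxH A \in unitmx.
Proof. by rewrite /mxH unitmx_tr map_unitmx. Qed.

Lemma sum_nat_delta L (F : 'I_L -> C) (k : nat) (b0 : 'I_L) : (b0 : nat) = k ->
  \sum_(b < L) ((b : nat) == k)%:R * F b = F b0.
Proof.
move=> b0k; rewrite (bigD1 b0) //= b0k eqxx mul1r big1 ?addr0 // => b bb0.
by rewrite (_ : (b : nat) == k = false) ?mul0r // -b0k; apply: contraNF bb0 => /eqP/val_inj->.
Qed.
End ComplexMatrix.

Section Steering.
Variable R : realType.
Local Notation C := R[i].

Definition steering (n M : nat) (g : 'I_M -> R) : 'M[C]_(n, M) :=
  \matrix_(a < n, i < M) expj (g i) ^+ a.+1.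

Definition phase_diag (M : nat) (g : 'I_M -> R) : 'M[C]_M := diag_mx (\row_i expj (g i)).

Definition take_rows (m n : nat) : 'M[C]_(m, n) := \matrix_(a < m, b < n) ((b : nat) == a)%:R.

Lemma take_rows_steering m n M (g : 'I_M -> R) : (m <= n)%N ->
  take_rows m n *m steering n g = steering m g.
Proof.
move=> le_mn; apply/matrixP => a i; rewrite !mxE.
under eq_bigr do rewrite !mxE.
by rewrite (sum_nat_delta _ (b0 := widen_ord le_mn a)) // mxE.
Qed.

Lemma sel_first_steering N M (g : 'I_M -> R) :
  sel_first R N *m steering N g = steering N.-1 g.
Proof. exact/take_rows_steering/leq_pred. Qed.

Lemma sel_last_steering N M (g : 'I_M -> R) :
  sel_last R N *m steering N g = steering N.-1 g *m phase_diag g.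
Proof.
apply/matrixP => a i; rewrite /phase_diag mul_mx_diag !mxE.
have aN : (a.+1 < N)%N by case: N a => [|N] [a aN].
under eq_bigr do rewrite !mxE.
by rewrite (sum_nat_delta _ (b0 := Ordinal aN)) // exprSr.
Qed.

Lemma steering_unit M (g : 'I_M -> R) :
  (forall i j, i != j -> expj (g i) != expj (g j) :> C) -> steering M g \in unitmx.
Proof.
move=> gD; have -> : steering M g = Vandermonde M (\row_i expj (g i)) *m phase_diag g.
  by apply/matrixP => a i; rewrite /phase_diag mul_mx_diag !mxE exprSr.
rewrite unitmx_mul !unitmxE !unitfE det_Vandermonde det_diag.
apply/andP; split; apply/prodf_neq0 => i _; last by rewrite mxE expj_neq0.
by apply/prodf_neq0 => j ij; rewrite !mxE subr_eq0 gD // neq_ltn ij orbT.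
Qed.

Lemma steering_unit_Nyquist M (k F : R) (u : 'I_M -> R) :
  0 < k -> k * F <= 1 -> (forall i, `|u i| < F / 2) ->
  (forall i j, i != j -> u i != u j) ->
  steering M (fun i => 2 * pi * k * u i) \in unitmx.
Proof.
move=> k_gt0 kF_le1 u_lt uD; apply: steering_unit => i j ij.
exact: expj_2pi_neq (u_lt i) (u_lt j) (uD i j ij).
Qed.

Lemma steering_corr_rank n M (gx gz : 'I_M -> R) (Rw : 'M[C]_M) : (M <= n)%N ->
  steering M gx \in unitmx -> steering M gz \in unitmx -> Rw \in unitmx ->
  (M <= \rank (steering n gx *m Rw *m mxH (steering n gz)))%N.
Proof.
move=> le_Mn Vx_unit Vz_unit Rw_unit.
apply: (@mxrank_ge_unit_mulmx _ _ _ _ (take_rows M n) _ (mxH (take_rows M n))).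
rewrite -!mulmxA -mxH_mul take_rows_steering // !mulmxA take_rows_steering //.
by rewrite !unitmx_mul Vx_unit Rw_unit mxH_unit.
Qed.
End Steering.

Section LeadingSingularVectors.
Variable R : realType.
Local Notation C := R[i].

Lemma first_colsH_mul m k : (k <= m)%N -> mxH (first_cols R m k) *m first_cols R m k = 1%:M.
Proof.
move=> le_km; apply/matrixP => i j; rewrite !mxE.
under eq_bigr do rewrite !mxE conjc_nat.
by rewrite (sum_nat_delta _ (b0 := widen_ord le_km i)).
Qed.

Lemma sv_diag_mul_pid m n (S : 'M[C]_(m, n)) (a : 'I_m) (j : 'I_n) :
  sv_diag S -> (a : nat) = j -> S a j = 0 -> S = S *m pid_mx a.
Proof.
move=> [S_off S_diag S_dec] aj Saj0; apply/matrixP => i0 j0.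
have -> : pid_mx a = diag_mx (\row_k ((k < a)%N)%:R) :> 'M[C]_n.
  apply/matrixP => k l; rewrite !mxE val_eqE.
  by case: eqVneq => _; rewrite ?mulr1n ?mulr0n ?andbF.
rewrite mul_mx_diag !mxE; case: ltnP => [_|le_a_j0]; first by rewrite mulr1.
rewrite mulr0.
have [i0j0|] := eqVneq (i0 : nat) j0; last by move/eqP/S_off.
have [ImS ReS] := S_diag _ _ i0j0.
have le_a_i0 : (a <= i0)%N by rewrite i0j0.
have := S_dec _ _ _ _ aj i0j0 le_a_i0; rewrite Saj0 /= => ReS0.
have ReS_eq0 : complex.Re (S i0 j0) = 0 by apply/eqP; rewrite eq_le ReS0 ReS.
by move: ImS ReS_eq0; case: (S i0 j0) => x y /= -> ->.
Qed.

Lemma svd_diag_neq0 m n (A : 'M[C]_(m, n)) U S V (a : 'I_m) (j : 'I_n) :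
  is_svd A U S V -> (a : nat) = j -> (a < \rank A)%N -> S a j != 0.
Proof.
move=> [_ _ Sdiag ->] aj; apply: contraTneq => Saj0; rewrite -leqNgt.
rewrite (sv_diag_mul_pid Sdiag aj Saj0) !mulmxA.
apply: leq_trans (mxrankM_maxl _ _) _; apply: leq_trans (mxrankM_maxr _ _) _.
by rewrite rank_pid_mx // aj ltnW.
Qed.

Lemma top_left_sing_vecs_factor K n M (A : 'M[C]_(K, n)) (G : 'M[C]_(K, M))
    (W : 'M[C]_(M, n)) (U1 : 'M[C]_(K, M)) :
  A = G *m W -> (M <= \rank A)%N -> top_left_sing_vecs A U1 ->
  exists2 T, T \in unitmx & U1 = G *m T.
Proof.
move=> AGW le_M_rk [U [S [V [svdA ->]]]]; have [Uu Vu Sdiag AUSV] := svdA.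
have le_MK : (M <= K)%N := leq_trans le_M_rk (rank_leq_row A).
have le_Mn : (M <= n)%N := leq_trans le_M_rk (rank_leq_col A).
(* D inverts the M leading singular values, which are nonzero since M <= rank A. *)
pose D := \matrix_(j < n, k < M) (((j : nat) == k)%:R * (S (widen_ord le_MK k) j)^-1).
have SD : S *m D = first_cols R K M.
  apply/matrixP => a k; rewrite !mxE.
  under eq_bigr do rewrite mxE mulrCA.
  rewrite (sum_nat_delta _ (b0 := widen_ord le_Mn k)) //.
  have [->|ak] := eqVneq a (widen_ord le_MK k).
    by rewrite eqxx mulfV // (svd_diag_neq0 svdA) //= (leq_trans _ le_M_rk).
  have ak_nat : (a : nat) != k by apply: contra_neq ak => /= ak; apply: val_inj.
  by case: Sdiag => S_off _ _; rewrite (negbTE ak_nat) (S_off a) ?mul0r //; exact/eqP.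
have US : U *m S = A *m V by rewrite AUSV -!mulmxA Vu mulmx1.
have U1E : U *m first_cols R K M = G *m (W *m V *m D).
  by rewrite -SD mulmxA US AGW !mulmxA.
exists (W *m V *m D); last by [].
have U1_isometry : mxH (U *m first_cols R K M) *m (U *m first_cols R K M) = 1%:M.
  by rewrite mxH_mul mulmxA -(mulmxA _ (mxH U)) Uu mulmx1 first_colsH_mul.
rewrite -row_free_unit /row_free eqn_leq rank_leq_row -{1}(mxrank1 C M) -U1_isometry.
by apply: leq_trans (mxrankM_maxr _ _) _; rewrite U1E mxrankM_maxr.
Qed.
End LeadingSingularVectors.

Section LArray.
Variables (R : realType) (M : nat) (dsp c : R) (f th : 'I_M -> R).

Definition phase (tr : R -> R) (i : 'I_M) : R := 2 * pi * (dsp / c) * (f i * tr (th i)).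

Lemma expj_delay (fi a : R) n :
  expj (2 * pi * fi * (dsp * n%:R / c * a)) = expj (2 * pi * (dsp / c) * (fi * a)) ^+ n :> R[i].
Proof. by rewrite expjX; congr expj; ring. Qed.

Lemma Ax_steering N : Ax N dsp c f th = steering N (phase cos).
Proof. by apply/matrixP => a i; rewrite !mxE /taux expj_delay. Qed.

Lemma Az_steering N : Az N dsp c f th = steering N (phase sin).
Proof. by apply/matrixP => a i; rewrite !mxE /tauz expj_delay. Qed.

Lemma Phi_phase_diag : Phi dsp c f th = phase_diag (phase cos).
Proof. by congr diag_mx; apply/rowP => i; rewrite !mxE /taux expj_delay expr1. Qed.

Lemma Psi_phase_diag : Psi dsp c f th = phase_diag (phase sin).
Proof. by congr diag_mx; apply/rowP => i; rewrite !mxE /tauz expj_delay expr1. Qed.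

Lemma Ecorr_steering d (T : measurableType d) (P : probability T R) (w : T -> 'cV[R[i]]_M)
    N m n (Sx : 'M[R[i]]_(m, N)) (Sz : 'M[R[i]]_(n, N)) :
  (forall i j, c_integrable P (fun t => w t i 0 * conjc (w t j 0))) ->
  Ecorr P (fun t => Sx *m (Ax N dsp c f th *m w t)) (fun t => Sz *m (Az N dsp c f th *m w t)) =
  Sx *m steering N (phase cos) *m Ecorr P w w *m mxH (Sz *m steering N (phase sin)).
Proof.
move=> iw; rewrite -Ecorr_mulmx // -Ax_steering -Az_steering.
by congr Ecorr; apply/funext => t; exact: mulmxA.
Qed.

Lemma steering_phase_unit (fNyq : R) (tr : R -> R) :
  0 < c -> 0 < dsp -> 0 < fNyq -> dsp <= c / fNyq -> (forall y, `|tr y| <= 1) ->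
  (forall i, `|f i| < fNyq / 2) ->
  (forall i j, i != j -> f i * tr (th i) != f j * tr (th j)) ->
  steering M (phase tr) \in unitmx.
Proof.
move=> c_gt0 dsp_gt0 fNyq_gt0 dsp_le tr1 f_lt trD.
apply: (steering_unit_Nyquist (F := fNyq)) trD; first by rewrite divr_gt0.
  by rewrite mulrAC ler_pdivrMr // mul1r -ler_pdivlMr.
by move=> i; rewrite normrM; apply: le_lt_trans (f_lt i); rewrite ler_piMr.
Qed.
End LArray.

Theorem lemma2 (R : realType) (M N : nat)
  (fNyq B c dsp : R) (f th : 'I_M -> R)
  (d : measure_display) (T : measurableType d) (P : probability T R)
  (w : T -> 'cV[R[i]]_M) :
  (* class M_2 *)
  0 < fNyq -> 0 < B -> 0 < c -> 0 < dsp ->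
  (forall i, - (fNyq / 2) <= f i - B / 2 /\ f i + B / 2 <= fNyq / 2) ->
  (forall i j, i != j -> B < `|f i - f j|) ->
  (forall i, `|th i| < pi / 2) ->
  (forall i j, i != j -> f i * cos (th i) != f j * cos (th j)) ->
  (forall i j, i != j -> f i * sin (th i) != f j * sin (th j)) ->
  (* R_w = E[w w^H] exists, is diagonal with nonzero diagonal entries *)
  (forall i j, c_integrable P (fun t => w t i 0 * conjc (w t j 0))) ->
  (forall i j : 'I_M, i != j -> Ecorr P w w i j = 0) ->
  (forall i : 'I_M, Ecorr P w w i i != 0) ->
  let x := fun t => Ax N dsp c f th *m w t in
  let z := fun t => Az N dsp c f th *m w t in
  let x1 := fun t => sel_first R N *m x t in
  let x2 := fun t => sel_last R N *m x t in
  let z1 := fun t => sel_first R N *m z t in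
  let z2 := fun t => sel_last R N *m z t in
  let R1 := Ecorr P x1 z1 in
  let R2 := Ecorr P x2 z1 in
  let R3 := Ecorr P x1 z2 in
  let Rm := col_mx (col_mx R1 R2) R3 in
  let Ax1 := sel_first R N *m Ax N dsp c f th in
  forall U1 : 'M[R[i]]_(N.-1 + N.-1 + N.-1, M),
  top_left_sing_vecs Rm U1 ->
  dsp <= c / fNyq ->
  (M < N)%N ->
  exists Tm : 'M[R[i]]_M, Tm \in unitmx /\
    U1 = col_mx (col_mx Ax1 (Ax1 *m Phi dsp c f th)) (Ax1 *m mxH (Psi dsp c f th)) *m Tm.
Proof.
move=> fNyq_gt0 B_gt0 c_gt0 dsp_gt0 band _ _ fcosD fsinD iw Rw_off Rw_neq0.
move=> x z x1 x2 z1 z2 R1 R2 R3 Rm Ax1 U1 U1_top dsp_le N_gt_M.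
pose Rw := Ecorr P w w; pose Vz := steering N.-1 (phase dsp c f th sin).
have Rw_diag : is_diag_mx Rw.
  by apply/is_diag_mxP => i j ij; apply: Rw_off; apply: contra_neq ij => ->.
have Ax1E : Ax1 = steering N.-1 (phase dsp c f th cos).
  by rewrite /Ax1 Ax_steering sel_first_steering.
have RmE : Rm = col_mx (col_mx Ax1 (Ax1 *m Phi dsp c f th)) (Ax1 *m mxH (Psi dsp c f th))
                *m (Rw *m mxH Vz).
  rewrite /Rm /R1 /R2 /R3 /x1 /x2 /z1 /z2 /x /z !(Ecorr_steering dsp c f th _ _ iw) -/Rw.
  rewrite !sel_first_steering !sel_last_steering !mul_col_mx.
  rewrite Ax1E Phi_phase_diag Psi_phase_diag !mxH_mul !mulmxA /phase_diag mxH_diag.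
  have [dw ->] := diag_mxP _ Rw_diag.
  by rewrite -(mulmxA _ (diag_mx dw) (diag_mx _)) diag_mx_comm mulmxA.
have f_lt i : `|f i| < fNyq / 2.
  by have [] := band i; rewrite ltr_norml => lo hi; apply/andP; split; lra.
have Vx_unit := steering_phase_unit c_gt0 dsp_gt0 fNyq_gt0 dsp_le (@cos_max R) f_lt fcosD.
have Vz_unit := steering_phase_unit c_gt0 dsp_gt0 fNyq_gt0 dsp_le (@sin_max R) f_lt fsinD.
have Rw_unit := is_diag_mx_unit Rw_diag Rw_neq0.
have M_le : (M <= N.-1)%N by rewrite -ltnS (leq_trans N_gt_M) // leqSpred.
have rk_Rm : (M <= \rank Rm)%N.
  apply: leq_trans (leq_trans (mxrank_col_mxl _ _) (mxrank_col_mxl _ _)).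
  rewrite /R1 /x1 /z1 /x /z (Ecorr_steering dsp c f th _ _ iw).
  by rewrite !sel_first_steering steering_corr_rank.
have [Tm Tm_unit U1E] := top_left_sing_vecs_factor RmE rk_Rm U1_top.
by exists Tm.
Qed.
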